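(* Let $G_1,\dots,G_n$ be groups and $G\leqslant G_1\times\dots\times G_n$ a subgroup whose projection onto each $G_i$ is surjective. Suppose $G$ has abelian entanglements with respect to $G_1\times\dots\times G_n$, and let $S\subseteq\{1,\dots,n\}$ be nonempty. Then $G_S$ has abelian entanglements with respect to $\prod_{i\in S}G_i$.
   Context: For nonempty $S\subseteq\{1,\dots,n\}$, $G_S$ denotes the image of $G$ under the projection $G_1\times\dots\times G_n\to\prod_{i\in S}G_i$. For a subgroup $H\leqslant H_1\times\dots\times H_k$ surjecting onto each $H_i$, and a partition $\mathcal P=\{A,B\}$ of $\{1,\dots,k\}$ into two nonempty sets, $H$ is a subgroup of $H_A\times H_B$ surjecting onto both factors; with $N_A=\{x\in H_A:(x,1)\in H\}$ (normal in $H_A$), the Goursat quotient is $Q_{\mathcal P}=H_A/N_A$. $H$ has abelian entanglements with respect to $H_1\times\dots\times H_k$ if $Q_{\mathcal P}$ is abelian for all such $\mathcal P$. *)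

From mathcomp Require Import all_boot.
Set Implicit Arguments. Unset Strict Implicit. Unset Printing Implicit Defensive.

Record group_on (T : Type) := GroupOn {
  gmul : T -> T -> T;
  gone : T;
  ginv : T -> T;
  gmulA : forall x y z, gmul x (gmul y z) = gmul (gmul x y) z;
  gmul1g : forall x, gmul gone x = x;
  gmulg1 : forall x, gmul x gone = x;
  gmulVg : forall x, gmul (ginv x) x = gone;
  gmulgV : forall x, gmul x (ginv x) = gone
}.

Definition gcomm (T : Type) (g : group_on T) (x y : T) : T :=
  gmul g (gmul g (ginv g x) (ginv g y)) (gmul g x y).

Section Prod.
Variables (I : Type) (T : I -> Type) (grp : forall i, group_on (T i)).

Definition is_subgroup_prod (H : (forall i, T i) -> Prop) : Prop :=
  [/\ H (fun i => gone (grp i)),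
      (forall x y, H x -> H y -> H (fun i => gmul (grp i) (x i) (y i)))
    & (forall x, H x -> H (fun i => ginv (grp i) (x i)))].

Definition surj_factors (H : (forall i, T i) -> Prop) : Prop :=
  forall i (y : T i), exists x, H x /\ x i = y.

(* Abelian entanglements: for every partition {A, B} of the index set into two
   nonempty parts, the Goursat quotient Q = H_A / N_A is abelian, where
   N_A = {x in H_A : (x,1) in H}.  Q is abelian iff every commutator [a,b] of
   elements a = x|_A, b = y|_A of H_A lies in N_A, i.e. iff there is z in H
   equal to [x,y] on A and to 1 on B. *)
Definition abelian_entanglements (H : (forall i, T i) -> Prop) : Prop :=
  forall A : I -> bool, (exists i, A i) -> (exists i, ~~ A i) ->
  forall x y, H x -> H y ->
  exists z, [/\ H z,
    (forall i, A i -> z i = gcomm (grp i) (x i) (y i))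
  & (forall i, ~~ A i -> z i = gone (grp i))].

Definition proj_sub (S : I -> bool) (H : (forall i, T i) -> Prop)
  : (forall j : {i : I | S i}, T (sval j)) -> Prop :=
  fun x' => exists g, H g /\ forall j, x' j = g (sval j).

Definition restr_grp (S : I -> bool) : forall j : {i : I | S i}, group_on (T (sval j)) :=
  fun j => grp (sval j).

End Prod.

Arguments proj_sub {I T} S H _.
Arguments restr_grp {I T} grp S j.

(* A partition {A', B'} of S extends to the partition {A', B' ∪ (I \ S)} of
   the whole index set; the element of G that the hypothesis provides for it,
   restricted to S, is the element of G_S required for {A', B'}. *)
From mathcomp Require Import all_boot.

Set Implicit Arguments. Unset Strict Implicit. Unset Printing Implicit Defensive.

Section ProjSub.
Variables (I : Type) (T : I -> Type) (grp : forall i, group_on (T i)).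
Variable S : I -> bool.

Definition extend_subpred (A : {i | S i} -> bool) (i : I) : bool :=
  if insub i is Some j then A j else false.

Lemma extend_subpredE (A : {i | S i} -> bool) (j : {i | S i}) :
  extend_subpred A (val j) = A j.
Proof. by rewrite /extend_subpred valK. Qed.

Lemma abelian_entanglements_proj_sub (H : (forall i, T i) -> Prop) :
  abelian_entanglements grp H ->
  abelian_entanglements (restr_grp grp S) (proj_sub S H).
Proof.
move=> entH A [jA Aj] [jB nAj] x' y' [x [Hx x'E]] [y [Hy y'E]].
have extA : exists i, extend_subpred A i by exists (val jA); rewrite extend_subpredE.
have extB : exists i, ~~ extend_subpred A i by exists (val jB); rewrite extend_subpredE.
have [z [Hz zA zB]] := entH _ extA extB x y Hx Hy.
exists (fun j => z (val j)); split.
- by exists z.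
- by move=> j Aj'; rewrite x'E y'E zA ?extend_subpredE.
- by move=> j nAj'; rewrite zB ?extend_subpredE.
Qed.

End ProjSub.

Theorem proposition2p7 (n : nat) (T : 'I_n -> Type)
  (grp : forall i, group_on (T i)) (G : (forall i, T i) -> Prop) :
  is_subgroup_prod grp G ->
  surj_factors G ->
  abelian_entanglements grp G ->
  forall S : {set 'I_n}, S != set0 ->
  abelian_entanglements (restr_grp grp (fun i => i \in S))
                        (proj_sub (fun i => i \in S) G).
Proof.
by move=> _ _ entG S _; apply: abelian_entanglements_proj_sub.
Qed.
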